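(* Let $1\le k\le n$ and let $\lambda=(\lambda_1,\dots,\lambda_n)$ be a partition with $\lambda_{n-k+1}=\dots=\lambda_n=0$. Let $x=(x_1,\dots,x_{n-k},t^{k-1},t^{k-2},\dots,t,1)\in\mathbb{C}^n$, $\hat\lambda=(\lambda_1,\dots,\lambda_{n-k})$ and $\hat x=(x_1,\dots,x_{n-k})$. Then $$W_\lambda(x;q,p,t,a,b)=W_{\hat\lambda}(\hat xt^{-k};q,p,t,at^{2k},bt^{k}).$$
   Context: Fix $|p|<1$; parameters generic. $E(x)=(x;p)_\infty(p/x;p)_\infty$. For integer $m\ge0$, $(a)_m=\prod_{k=0}^{m-1}E(aq^k)$, for $m<0$, $(a)_m=1/(aq^m)_{-m}$; for a partition $\lambda$ with $N$ parts $(a)_\lambda=\prod_{i=1}^N(at^{1-i})_{\lambda_i}$; several arguments denote products; integer subscripts denote the single-integer symbol. Scalars multiply tuples componentwise. $W$ functions for $N$-part partitions (here $N=n$ or $N=n-k$, the number of variables): for $\lambda_1\ge\mu_1\ge\dots\ge\lambda_N\ge\mu_N$, $\lambda_{N+1}=\mu_{N+1}=0$, $H_{\lambda/\mu}(q,p,t,b)=\prod_{1\le i<j\le N}\Big\{\frac{(q^{\mu_i-\mu_{j-1}}t^{j-i})_{\mu_{j-1}-\lambda_j}(q^{\lambda_i+\lambda_j}t^{3-j-i}b)_{\mu_{j-1}-\lambda_j}}{(q^{\mu_i-\mu_{j-1}+1}t^{j-i-1})_{\mu_{j-1}-\lambda_j}(q^{\lambda_i+\lambda_j+1}t^{2-j-i}b)_{\mu_{j-1}-\lambda_j}}\frac{(q^{\lambda_i-\mu_{j-1}+1}t^{j-i-1})_{\mu_{j-1}-\lambda_j}}{(q^{\lambda_i-\mu_{j-1}}t^{j-i})_{\mu_{j-1}-\lambda_j}}\Big\}\prod_{1\le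 i<j-1\le N}\frac{(q^{\mu_i+\lambda_j+1}t^{1-j-i}b)_{\mu_{j-1}-\lambda_j}}{(q^{\mu_i+\lambda_j}t^{2-j-i}b)_{\mu_{j-1}-\lambda_j}}$; for $x\in\mathbb{C}$, $W_{\lambda/\mu}(x;q,p,t,a,b)=H_{\lambda/\mu}\frac{(x^{-1},ax)_\lambda(qbx/t,qb/(axt))_\mu}{(x^{-1},ax)_\mu(qbx,qb/(ax))_\lambda}\prod_{i=1}^N\frac{E(bt^{1-2i}q^{2\mu_i})}{E(bt^{1-2i})}\frac{(bt^{1-2i})_{\mu_i+\lambda_{i+1}}}{(bqt^{-2i})_{\mu_i+\lambda_{i+1}}}t^{i(\mu_i-\lambda_{i+1})}$ (zero if the interlacing fails); recursively $W_{\lambda/\mu}(y,z_1,\dots,z_\ell;q,p,t,a,b)=\sum_\nu W_{\lambda/\nu}(yt^{-\ell};q,p,t,at^{2\ell},bt^\ell)W_{\nu/\mu}(z_1,\dots,z_\ell;q,p,t,a,b)$ over $\nu$ with $\lambda_1\ge\nu_1\ge\dots\ge\lambda_N\ge\nu_N\ge0$; $W_\lambda=W_{\lambda/0}$, a function of $N$ variables. *)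

From HB Require Import structures.
From mathcomp Require Import all_boot all_order all_algebra.
From mathcomp Require Import complex.
From mathcomp Require Import all_classical all_reals all_analysis.

Set Implicit Arguments.
Unset Strict Implicit.
Unset Printing Implicit Defensive.

Import Order.TTheory GRing.Theory Num.Theory.
Import numFieldTopology.Exports numFieldNormedType.Exports.
Local Open Scope ring_scope.
Local Open Scope complex_scope.

Definition complexC (R : realType) : numClosedFieldType := R[i].

Definition qpoch_inf (R : realType) (x p : complexC R) : complexC R :=
  limn (fun n : nat => \prod_(k < n) (1 - x * p ^+ k)).

Definition Eth (R : realType) (p x : complexC R) : complexC R :=
  qpoch_inf x p * qpoch_inf (p / x) p.

Definition epoch (R : realType) (q p a : complexC R) (m : int) : complexC R :=
  match m with
  | Posz n => \prod_(k < n) Eth p (a * q ^+ k)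
  | Negz n => (\prod_(k < n.+1) Eth p (a * q ^ (- (n.+1)%:Z) * q ^+ k))^-1
  end.

(* i-th part (1-indexed) of an N-part partition stored as a seq nat;
   lambda_i = 0 for i > N (in particular lambda_{N+1} = 0). *)
Definition part (N : nat) (l : seq nat) (i : nat) : nat :=
  if (1 <= i <= N)%N then nth 0%N l i.-1 else 0%N.

Definition epochP (R : realType) (N : nat) (q p t a : complexC R) (l : seq nat) : complexC R :=
  \prod_(1 <= i < N.+1) epoch q p (a * t ^ (1 - i%:Z)) (part N l i)%:Z.

(* (a)_lambda / (a)_mu, written in cancelled form
   prod_{i=1}^N (a t^{1-i} q^{mu_i})_{lambda_i - mu_i}. *)
Definition epochR (R : realType) (N : nat) (q p t a : complexC R) (l m : seq nat) : complexC R :=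
  \prod_(1 <= i < N.+1)
     epoch q p (a * t ^ (1 - i%:Z) * q ^ (part N m i)%:Z)
           ((part N l i)%:Z - (part N m i)%:Z).

Definition interlace (N : nat) (l m : seq nat) : bool :=
  [forall i : 'I_N, (part N m i.+1 <= part N l i.+1)%N
                    && (part N l i.+2 <= part N m i.+1)%N].

Definition Hfac (R : realType) (N : nat) (q p t b : complexC R) (l m : seq nat) : complexC R :=
  let L := part N l in let M := part N m in
  let e := fun a (n : int) => epoch q p a n in
  (\prod_(1 <= j < N.+1) \prod_(1 <= i < j)
     (let d := (M j.-1)%:Z - (L j)%:Z in
      (e (q ^ ((M i)%:Z - (M j.-1)%:Z) * t ^ (j%:Z - i%:Z)) d
       * e (q ^ ((L i)%:Z + (L j)%:Z) * t ^ (3 - j%:Z - i%:Z) * b) d)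
      / (e (q ^ ((M i)%:Z - (M j.-1)%:Z + 1) * t ^ (j%:Z - i%:Z - 1)) d
       * e (q ^ ((L i)%:Z + (L j)%:Z + 1) * t ^ (2 - j%:Z - i%:Z) * b) d)
      * (e (q ^ ((L i)%:Z - (M j.-1)%:Z + 1) * t ^ (j%:Z - i%:Z - 1)) d
         / e (q ^ ((L i)%:Z - (M j.-1)%:Z) * t ^ (j%:Z - i%:Z)) d)))
  * (\prod_(1 <= j < N.+2) \prod_(1 <= i < j.-1)
     (let d := (M j.-1)%:Z - (L j)%:Z in
      e (q ^ ((M i)%:Z + (L j)%:Z + 1) * t ^ (1 - j%:Z - i%:Z) * b) d
      / e (q ^ ((M i)%:Z + (L j)%:Z) * t ^ (2 - j%:Z - i%:Z) * b) d)).

Definition W1 (R : realType) (N : nat) (q p t a b : complexC R) (l m : seq nat) (x : complexC R)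
  : complexC R :=
  if interlace N l m then
    let L := part N l in let M := part N m in
    Hfac N q p t b l m
    * epochR N q p t (x^-1) l m * epochR N q p t (a * x) l m
    * (epochP N q p t (q * b * x / t) m * epochP N q p t (q * b / (a * x * t)) m)
    / (epochP N q p t (q * b * x) l * epochP N q p t (q * b / (a * x)) l)
    * \prod_(1 <= i < N.+1)
        (Eth p (b * t ^ (1 - 2 * i%:Z) * q ^ (2 * (M i)%:Z)) / Eth p (b * t ^ (1 - 2 * i%:Z))
         * (epoch q p (b * t ^ (1 - 2 * i%:Z)) ((M i)%:Z + (L i.+1)%:Z)
            / epoch q p (b * q * t ^ (- 2 * i%:Z)) ((M i)%:Z + (L i.+1)%:Z))
         * t ^ (i%:Z * ((M i)%:Z - (L i.+1)%:Z)))
  else 0.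

Fixpoint allseqs (N B : nat) : seq (seq nat) :=
  match N with
  | 0 => [:: [::]]
  | N'.+1 => [seq x :: s | x <- iota 0 B.+1, s <- allseqs N' B]
  end.

Fixpoint W (R : realType) (N : nat) (q p t : complexC R) (l m : seq nat) (xs : seq (complexC R))
  (a b : complexC R) {struct xs} : complexC R :=
  match xs with
  | [::] => if [forall i : 'I_N, part N l i.+1 == part N m i.+1] then 1 else 0
  | [:: y] => W1 N q p t a b l m y
  | y :: zs =>
      let ell := size zs in
      \sum_(nu <- allseqs N (part N l 1) | interlace N l nu)
         W1 N q p t (a * t ^+ (2 * ell)) (b * t ^+ ell) l nu (y * t ^- ell)
         * W N q p t nu m zs a b
  end.

(* The specialisation (t^(k-1), ..., t, 1) of the last k variables acts as if these
   variables were absent: by the branching rule it reduces to W_{nu/0}(1) with shifted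
   parameters, which vanishes unless nu = 0 because (x^-1)_nu contains E(1) = 0.
   Peeling off x_1, ..., x_(n-k) with the branching rule then produces the shifts
   a t^(2k), b t^k, x t^(-k), and only intermediate partitions nu with nu_(n-k) = 0
   contribute, since W_nu vanishes in fewer variables than nu has parts. For such nu
   every factor of the n-part weight involving a part beyond n-k is trivial, so it
   equals the (n-k)-part weight. *)

From HB Require Import structures.
From mathcomp Require Import all_boot all_order all_algebra.
From mathcomp Require Import complex.
From mathcomp Require Import all_classical all_reals all_analysis.
From mathcomp Require Import zify.
Import Order.TTheory GRing.Theory Num.Theory.
Import numFieldTopology.Exports numFieldNormedType.Exports.
Local Open Scope ring_scope.
Local Open Scope complex_scope.

Set Implicit Arguments.
Unset Strict Implicit.
Unset Printing Implicit Defensive.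

Lemma part_gt N l i : (N < i)%N -> part N l i = 0%N.
Proof. by move=> lt_Ni; rewrite /part (leqNgt i N) lt_Ni andbF. Qed.

Lemma part_nseq0 N M i : part N (nseq M 0%N) i = 0%N.
Proof. by rewrite /part nth_nseq !if_same. Qed.

Lemma part_take m s : part m (take m s) =1 part m s.
Proof. by case=> [|i] //; rewrite /part /=; case: ifP => // lt_im; rewrite nth_take. Qed.

Lemma part_cat_nseq0 n m s : size s = m -> (m <= n)%N ->
  part n (s ++ nseq (n - m) 0%N) =1 part m s.
Proof.
move=> <- le_mn [|i] //; rewrite /part /= nth_cat nth_nseq !if_same.
case: (ltnP i (size s)) => [lt_is | le_si]; last by rewrite !if_same.
by rewrite (leq_trans lt_is le_mn).
Qed.

Lemma part_widen n m l : (m <= n)%N -> (forall i, (m < i)%N -> part n l i = 0%N) ->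
  part n l =1 part m l.
Proof.
move=> le_mn l0 i; case: (ltnP m i) => [lt_mi | le_im]; first by rewrite l0 // part_gt.
by case: i le_im => [|i] // le_im; rewrite /part /= le_im (leq_trans le_im le_mn).
Qed.

Lemma cat_take_nseq0 n m s : size s = n -> (m <= n)%N ->
  (forall i, (m < i)%N -> part n s i = 0%N) -> s = take m s ++ nseq (n - m) 0%N.
Proof.
move=> size_s le_mn s0; rewrite -{1}(cat_take_drop m s); congr (_ ++ _).
apply: (eq_from_nth (x0 := 0%N)); first by rewrite size_drop size_nseq size_s.
rewrite size_drop size_s => j lt_j; rewrite nth_drop nth_nseq lt_j.
have lt_mjn : (m + j < n)%N by lia.
by have := s0 (m + j).+1; rewrite /part /= ltnS leq_addr lt_mjn /= => /(_ isT).
Qed.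

Lemma interlaceP N l nu :
  reflect (forall i, part N l i.+2 <= part N nu i.+1 <= part N l i.+1)%N (interlace N l nu).
Proof.
apply: (iffP forallP) => [H i | H i]; last by rewrite andbC H.
case: (ltnP i N) => [lt_iN | le_Ni]; first by rewrite andbC; exact: (H (Ordinal lt_iN)).
by rewrite (@part_gt N nu) ?(@part_gt N l i.+2) // ltnS ?(leqW le_Ni).
Qed.

Lemma interlace_widen N m l l' nu nu' :
  part N l =1 part m l' -> part N nu =1 part m nu' -> interlace N l nu = interlace m l' nu'.
Proof.
by move=> hl hnu; apply/interlaceP/interlaceP => H i; [rewrite -!hl -hnu | rewrite !hl hnu].
Qed.

Lemma interlace_part_le N l nu i : interlace N l nu -> (part N nu i <= part N l i)%N.
Proof. by move=> /interlaceP H; case: i => [|i] //; case/andP: (H i). Qed.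

Lemma interlace_part_eq0 N l nu s j : interlace N l nu -> (0 < s <= j)%N ->
  part N nu s = 0%N -> part N nu j = 0%N.
Proof.
move=> /interlaceP H /andP[s_gt0 le_sj] nu_s0; elim: j le_sj => [|j IH].
  by rewrite leqn0 => /eqP s0; rewrite s0 in s_gt0.
rewrite leq_eqVlt => /orP[/eqP <- // | ]; rewrite ltnS => le_sj.
case: j IH le_sj => [|j] IH le_sj.
  by rewrite leqn0 in le_sj; rewrite (eqP le_sj) in s_gt0.
have /andP[_ le_nu_l] := H j.+1; have /andP[le_l_nu _] := H j.
by apply/eqP; rewrite -leqn0 -(IH le_sj) (leq_trans le_nu_l le_l_nu).
Qed.

Lemma zero_partP N l :
  reflect (part N l =1 (fun=> 0%N)) [forall i : 'I_N, part N l i.+1 == 0%N].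
Proof.
apply: (iffP forallP) => [H [|i] // | H i]; last by rewrite H.
by case: (ltnP i N) => [lt_iN | le_Ni]; [exact/eqP/(H (Ordinal lt_iN)) | rewrite part_gt].
Qed.

Lemma zero_part_nseq0 N nu : size nu = N ->
  [forall i : 'I_N, part N nu i.+1 == 0%N] = (nu == nseq N 0%N).
Proof.
move=> size_nu; apply/zero_partP/eqP => [H | -> i]; last exact: part_nseq0.
apply: (eq_from_nth (x0 := 0%N)); rewrite ?size_nseq // => i lt_i.
by have := H i.+1; rewrite /part /= -size_nu lt_i nth_nseq lt_i.
Qed.

Lemma mem_allseqs N B s :
  (s \in allseqs N B) = (size s == N) && all (fun x => x <= B)%N s.
Proof.
elim: N s => [|N IH] s; first by case: s.
apply/allpairsP/idP => [[[y u] [hy hu ->]] | ].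
  move: hu hy; rewrite IH mem_iota add0n ltnS => /andP[hsu hau] hy.
  by rewrite /= eqSS hsu hau; case/andP: hy => _ ->.
case: s => [|x s] // /andP[hs /andP[hx ha]].
exists (x, s); split; [by rewrite mem_iota add0n ltnS | | by []].
by rewrite IH -(eqSS _ N) hs.
Qed.

Lemma uniq_allseqs N B : uniq (allseqs N B).
Proof.
elim: N => [|N IH] //.
have -> : allseqs N.+1 B = [seq x :: s | x <- iota 0 B.+1, s <- allseqs N B] by [].
apply: allpairs_uniq => //; first exact: iota_uniq.
by move=> [x s] [y u] _ _ /= [-> ->].
Qed.

Lemma nseq0_allseqs N B : nseq N 0%N \in allseqs N B.
Proof. by rewrite mem_allseqs size_nseq eqxx; apply/allP => x /nseqP[->]. Qed.

Lemma prod_nat1_trunc (S : pzSemiRingType) (F : nat -> S) m N : (m <= N)%N ->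
  (forall i, (m < i)%N -> F i = 1) ->
  \prod_(1 <= i < N.+1) F i = \prod_(1 <= i < m.+1) F i.
Proof.
move=> le_mN F1; rewrite (big_cat_nat _ (n := m.+1)) //= ?ltnS //.
have -> : \prod_(m.+1 <= i < N.+1) F i = 1.
  by rewrite big_nat_cond big1 // => i /andP[/andP[lt_mi _] _]; exact: F1.
by rewrite mulr1.
Qed.

Section EllipticW.
Variable R : realType.
Implicit Types (q p t a b x y : complexC R) (T xs : seq (complexC R)).

Lemma qpoch_inf1 p : qpoch_inf 1 p = 0.
Proof.
apply: (@lim_near_cst (complexC R : numFieldType)); first exact: norm_hausdorff.
by exists 1%N => // -[|N] // _; rewrite big_ord_recl expr0 mulr1 subrr mul0r.
Qed.

Lemma Eth1 p : Eth p 1 = 0.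
Proof. by rewrite /Eth qpoch_inf1 mul0r. Qed.

Lemma epoch0 q p c : epoch q p c 0 = 1.
Proof. exact: big_ord0. Qed.

Lemma W_cons N q p t l mu y zs a b : zs != [::] ->
  W N q p t l mu (y :: zs) a b =
  \sum_(nu <- allseqs N (part N l 1) | interlace N l nu)
     W1 N q p t (a * t ^+ (2 * size zs)) (b * t ^+ size zs) l nu (y * t ^- size zs)
     * W N q p t nu mu zs a b.
Proof. by case: zs. Qed.

Lemma W_nil_nseq0 N q p t l a b : W N q p t l (nseq N 0%N) [::] a b =
  if [forall i : 'I_N, part N l i.+1 == 0%N] then 1 else 0.
Proof. by rewrite /=; under eq_forallb => i do rewrite part_nseq0. Qed.

Lemma W1_not_interlace N q p t a b l mu x :
  ~~ interlace N l mu -> W1 N q p t a b l mu x = 0.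
Proof. by move=> l_mu; rewrite /W1 (negbTE l_mu). Qed.

Lemma sum_interlace_W_nil N B q p t a b l (F : seq nat -> complexC R) :
  \sum_(nu <- allseqs N B | interlace N l nu) F nu * W N q p t nu (nseq N 0%N) [::] a b
  = if interlace N l (nseq N 0%N) then F (nseq N 0%N) else 0.
Proof.
rewrite big_mkcond (bigD1_seq (nseq N 0%N)) ?nseq0_allseqs ?uniq_allseqs //.
rewrite big1_seq => [|nu /andP[nu_ne0 nu_in]].
  by rewrite W_nil_nseq0 zero_part_nseq0 ?size_nseq // eqxx mulr1 /= addr0.
have size_nu : size nu = N by move: nu_in; rewrite mem_allseqs => /andP[/eqP].
by rewrite W_nil_nseq0 zero_part_nseq0 // (negbTE nu_ne0) mulr0 if_same.
Qed.

Section Widen.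
Variables (m N : nat).
Hypothesis le_mN : (m <= N)%N.

Lemma epochP_widen {q p t c} l l' :
  part N l =1 part m l' -> epochP N q p t c l = epochP m q p t c l'.
Proof.
move=> hl; rewrite /epochP (funext hl) (prod_nat1_trunc le_mN) // => i lt_mi.
by rewrite part_gt // epoch0.
Qed.

Lemma epochR_widen {q p t c} l l' mu mu' :
  part N l =1 part m l' -> part N mu =1 part m mu' ->
  epochR N q p t c l mu = epochR m q p t c l' mu'.
Proof.
move=> hl hmu; rewrite /epochR (funext hl) (funext hmu) (prod_nat1_trunc le_mN) // => i lt_mi.
by rewrite !part_gt // subrr epoch0.
Qed.

(* The factors of H with j = m + 1 involve mu_m, hence the hypothesis mu'_m = 0. *)
Lemma Hfac_widen {q p t b} l l' mu mu' :
  part N l =1 part m l' -> part N mu =1 part m mu' -> part m mu' m = 0%N ->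
  Hfac N q p t b l mu = Hfac m q p t b l' mu'.
Proof.
move=> hl hmu mu'_m; rewrite /Hfac (funext hl) (funext hmu).
have mu'_prev j : (m < j)%N -> part m mu' j.-1 = 0%N.
  by case: j => // j; rewrite ltnS leq_eqVlt => /orP[/eqP <- // | /part_gt].
rewrite (prod_nat1_trunc le_mN) => [|j lt_mj]; last first.
  apply: big1 => i _.
  by rewrite mu'_prev // (@part_gt m l' j) // subrr !epoch0 !(mulr1, invr1).
rewrite (prod_nat1_trunc (m := m.+1) (N := N.+1)) // => j lt_mj; apply: big1 => i _.
have lt_mj' := ltnW lt_mj.
by rewrite mu'_prev // (@part_gt m l' j) // subrr !epoch0 !(mulr1, invr1).
Qed.

Lemma W1_widen {q p t a b x} l l' mu mu' :
  part N l =1 part m l' -> part N mu =1 part m mu' -> part m mu' m = 0%N ->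
  (forall i, (m < i)%N -> Eth p (b * t ^ (1 - 2 * i%:Z)) != 0) ->
  W1 N q p t a b l mu x = W1 m q p t a b l' mu' x.
Proof.
move=> hl hmu mu'_m hE; rewrite /W1 (interlace_widen hl hmu); case: ifP => // _.
rewrite (Hfac_widen hl hmu mu'_m) !(epochR_widen hl hmu).
rewrite !(epochP_widen hl) !(epochP_widen hmu); congr (_ * _).
rewrite (funext hl) (funext hmu) (prod_nat1_trunc le_mN) // => i lt_mi.
rewrite (@part_gt m mu' i) // (@part_gt m l' i.+1 (ltnW lt_mi)).
rewrite mulr0 expr0z mulr1 divff ?hE // addr0.
by rewrite !epoch0 mulr0 expr0z divr1 !mulr1.
Qed.

Lemma W_nil_widen {q p t a b a' b'} l l' : part N l =1 part m l' ->
  W N q p t l (nseq N 0%N) [::] a b = W m q p t l' (nseq m 0%N) [::] a' b'.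
Proof.
move=> hl; rewrite !W_nil_nseq0; congr (if _ then _ else _).
by apply/zero_partP/zero_partP => H i; [rewrite -hl | rewrite hl]; exact: H.
Qed.

Lemma sum_interlace_widen B l l' (F : seq nat -> complexC R) : part N l =1 part m l' ->
  \sum_(nu <- allseqs N B | interlace N l nu) F nu =
  \sum_(nu <- allseqs m B | interlace m l' nu) F (nu ++ nseq (N - m) 0%N).
Proof.
move=> hl; rewrite -[LHS]big_filter -[RHS]big_filter.
rewrite -(big_map (fun nu => nu ++ nseq (N - m) 0%N) xpredT F).
apply: perm_big; apply: uniq_perm.
- exact/filter_uniq/uniq_allseqs.
- rewrite map_inj_in_uniq ?filter_uniq ?uniq_allseqs // => s1 s2.
  rewrite !mem_filter !mem_allseqs => /andP[_ /andP[/eqP size1 _]].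
  move=> /andP[_ /andP[/eqP size2 _]].
  by rewrite -size2 in size1 *; move/eqP; rewrite eqseq_cat // => /andP[/eqP].
move=> nu; rewrite mem_filter mem_allseqs; apply/idP/mapP.
  case/andP=> l_nu /andP[/eqP size_nu nu_le].
  have nu0 i : (m < i)%N -> part N nu i = 0%N.
    by move=> lt_mi; apply/eqP; rewrite -leqn0 -(part_gt l' lt_mi) -hl interlace_part_le.
  exists (take m nu); last exact: cat_take_nseq0.
  have hnu : part N nu =1 part m (take m nu).
    by move=> i; rewrite part_take (part_widen le_mN nu0).
  rewrite mem_filter mem_allseqs -(interlace_widen hl hnu) l_nu size_takel ?size_nu //=.
  by rewrite eqxx; apply/allP => x /mem_take; apply: (allP nu_le).
case=> nu' + ->; rewrite mem_filter mem_allseqs => /andP[l'_nu' /andP[/eqP size_nu' nu'_le]].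
have hnu := part_cat_nseq0 size_nu' le_mN.
rewrite (interlace_widen hl hnu) l'_nu' size_cat size_nseq size_nu' subnKC // eqxx.
rewrite all_cat nu'_le.
by apply/allP => x /nseqP[->].
Qed.

End Widen.

Lemma W1_0 q p t a b l mu x : W1 0 q p t a b l mu x = 1.
Proof.
rewrite /W1; have -> : interlace 0 l mu by apply/forallP => -[].
by rewrite /Hfac /epochR /epochP big_nat1 !big_geq // !(mul1r, invr1).
Qed.

Lemma epochR_x1 N q p t l mu : (0 < part N l 1)%N -> part N mu 1 = 0%N ->
  epochR N q p t 1^-1 l mu = 0.
Proof.
move=> l1_gt0 mu1; case: (posnP N) => [N0 | N_gt0]; first by rewrite N0 part_gt in l1_gt0.
rewrite /epochR big_ltn ?ltnS // mu1 subrr expr0z invr1 !mulr1 subr0.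
by case: (part N l 1) l1_gt0 => // n _; rewrite /epoch big_ord_recl expr0 mulr1 Eth1 !mul0r.
Qed.

(* lambda interlaces 0 only if lambda_j = 0 for j >= 2; then (x^-1)_lambda contains
   E(1) = 0 at x = 1 unless lambda = 0. *)
Lemma W1_x1 N q p t a b l : (forall i : nat, Eth p (b * t ^ (1 - 2 * i%:Z)) != 0) ->
  W1 N q p t a b l (nseq N 0%N) 1 = W N q p t l (nseq N 0%N) [::] a b.
Proof.
move=> hE; rewrite W_nil_nseq0.
have [l_0 | l_0] := boolP (interlace N l (nseq N 0%N)); last first.
  rewrite W1_not_interlace //; case: zero_partP => // l0; case/negP: l_0.
  by apply/interlaceP => i; rewrite !l0 part_nseq0.
have l_ge2 j : part N l j.+2 = 0%N.
  by apply/eqP; have /andP[] := interlaceP _ _ _ l_0 j; rewrite part_nseq0 leqn0.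
case: (posnP (part N l 1)) => [l1 | l1_gt0].
  have l_zero : part N l =1 (fun=> 0%N) by case=> [|[|j]] //; rewrite ?l1 ?l_ge2.
  have to_nil s : part N s =1 (fun=> 0%N) -> part N s =1 part 0 [::].
    by move=> s0 i; rewrite s0 /part nth_nil if_same.
  rewrite (W1_widen (leq0n N) (to_nil _ l_zero) (to_nil _ (part_nseq0 N N))) // W1_0.
  by case: zero_partP => // /(_ l_zero).
rewrite /W1 l_0 epochR_x1 ?part_nseq0 // !(mulr0, mul0r).
by case: zero_partP => // /(_ 1%N) l1; rewrite l1 in l1_gt0.
Qed.

Section EmptyTail.
Variables (N : nat) (q p t a b : complexC R) (T : seq (complexC R)).
Hypothesis W_T : forall nu,
  W N q p t nu (nseq N 0%N) T a b = W N q p t nu (nseq N 0%N) [::] a b.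

Lemma W_cons_empty_tail y l :
  W N q p t l (nseq N 0%N) (y :: T) a b =
  W1 N q p t (a * t ^+ (2 * size T)) (b * t ^+ size T) l (nseq N 0%N) (y * t ^- size T).
Proof.
case: T W_T => [_ | z zs W_zs]; first by rewrite /= !(muln0, expr0, mulr1, invr1).
rewrite W_cons //; under eq_bigr => nu _ do rewrite W_zs.
by rewrite sum_interlace_W_nil; case: ifP => // /negbT /W1_not_interlace ->.
Qed.

Lemma W_cat_empty_tail_eq0 xs l : part N l (size xs).+1 != 0%N ->
  W N q p t l (nseq N 0%N) (xs ++ T) a b = 0.
Proof.
elim: xs l => [|y xs IH] l l_ne0.
  rewrite W_T W_nil_nseq0; case: zero_partP => // /(_ 1%N) l1.
  by rewrite l1 in l_ne0.
rewrite cat_cons; case E: (xs ++ T) => [|z zs].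
  case: xs E IH l_ne0 => // /= _ _ l2_ne0; rewrite W1_not_interlace //.
  by apply/negP => /interlaceP/(_ 0%N); rewrite part_nseq0 leqn0 (negbTE l2_ne0).
rewrite W_cons // -E; apply: big1 => nu /interlaceP/(_ (size xs))/andP[le_l_nu _].
by rewrite IH ?mulr0 //; apply: contraNneq l_ne0 => nu0; rewrite -leqn0 -nu0.
Qed.

End EmptyTail.

Lemma W_eq0 N q p t a b xs l : part N l (size xs).+1 != 0%N ->
  W N q p t l (nseq N 0%N) xs a b = 0.
Proof. by move=> l_ne0; rewrite -[xs]cats0 (W_cat_empty_tail_eq0 (T := [::])). Qed.

Definition tpowers t r : seq (complexC R) := [seq t ^+ (r - 1 - j) | j <- iota 0 r].

Lemma tpowersS t r : tpowers t r.+1 = t ^+ r :: tpowers t r.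
Proof.
rewrite /tpowers /= subn0 subn1 /=; congr (_ :: _).
by rewrite -[1%N]addn0 iotaDl -map_comp; apply: eq_map => j /=; congr (_ ^+ _); lia.
Qed.

Lemma size_tpowers t r : size (tpowers t r) = r.
Proof. by rewrite size_map size_iota. Qed.

Lemma W_tpowers N q p t a b r l : t != 0 ->
  (forall s i : nat, Eth p (b * t ^+ s * t ^ (1 - 2 * i%:Z)) != 0) ->
  W N q p t l (nseq N 0%N) (tpowers t r) a b = W N q p t l (nseq N 0%N) [::] a b.
Proof.
move=> t_ne0 hE; elim: r l => [|r IH] l //.
rewrite tpowersS (W_cons_empty_tail IH) size_tpowers mulfV ?expf_neq0 //.
exact: W1_x1.
Qed.

Lemma W_cat_empty_tail n m q p t a b T xs l l' :
  (m <= n)%N -> (size xs <= m)%N ->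
  (forall nu, W n q p t nu (nseq n 0%N) T a b = W n q p t nu (nseq n 0%N) [::] a b) ->
  (forall s i : nat, (m < i)%N -> Eth p (b * t ^+ s * t ^ (1 - 2 * i%:Z)) != 0) ->
  part n l =1 part m l' ->
  W n q p t l (nseq n 0%N) (xs ++ T) a b =
  W m q p t l' (nseq m 0%N) [seq y * t ^- size T | y <- xs]
    (a * t ^+ (2 * size T)) (b * t ^+ size T).
Proof.
move=> le_mn + W_T hE; elim: xs l l' => [|y [|z zs] IH] l l' size_xs hl.
- by rewrite W_T; apply: W_nil_widen.
- rewrite cat_cons (W_cons_empty_tail W_T) [RHS]/=.
  have nseq0 : part n (nseq n 0%N) =1 part m (nseq m 0%N) by move=> i; rewrite !part_nseq0.
  by apply: (W1_widen le_mn hl nseq0 (part_nseq0 m m m)) => i lt_mi; exact: hE.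
rewrite cat_cons W_cons // map_cons W_cons // (hl 1%N).
rewrite (sum_interlace_widen le_mn _ _ hl) big_seq_cond [RHS]big_seq_cond.
apply: eq_bigr => nu /andP[nu_in l_nu].
have size_nu : size nu = m by move: nu_in; rewrite mem_allseqs => /andP[/eqP].
have hnu := part_cat_nseq0 size_nu le_mn.
have [nu_S0 | nu_S] := eqVneq (part m nu (size (z :: zs)).+1) 0%N; last first.
  by rewrite (W_cat_empty_tail_eq0 W_T) ?hnu // W_eq0 ?mulr0 // size_map.
congr (_ * _); last by apply: IH => //; apply: ltnW.
rewrite (W1_widen le_mn hl hnu) => [||i lt_mi]; last 2 first.
- by apply: (interlace_part_eq0 l_nu _ nu_S0); rewrite ltn0Sn.
- exact: hE.
rewrite size_cat size_map -!mulrA -!exprD -invfM -exprD mulnDr.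
by rewrite (addnC (size T)) (addnC (2 * size T)).
Qed.

End EllipticW.

Theorem mainTheorem8 (R : realType) (n k : nat) (lam : seq nat) (xh : seq (complexC R))
    (q p t a b : complexC R) :
  (1 <= k <= n)%N ->
  size lam = n -> sorted geq lam ->
  (forall j : nat, (n - k <= j < n)%N -> nth 0%N lam j = 0%N) ->
  size xh = (n - k)%N ->
  `|p| < 1 ->
  (* genericity of the parameters *)
  q != 0 -> t != 0 -> a != 0 -> b != 0 -> all (fun y => y != 0) xh ->
  (forall (e1 e2 e3 e4 : int) (ms : seq int), size ms = (n - k)%N ->
     ~~ [&& e1 == 0, e2 == 0, e3 == 0, e4 == 0 & all (fun m => m == 0) ms] ->
     Eth p (q ^ e1 * t ^ e2 * a ^ e3 * b ^ e4
            * \prod_(r < n - k) (nth 0 xh r) ^ (nth 0 ms r)) != 0) ->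
  W n q p t lam (nseq n 0%N) (xh ++ [seq t ^+ (k - 1 - j) | j <- iota 0 k]) a b
  = W (n - k) q p t (take (n - k) lam) (nseq (n - k) 0%N)
      [seq y * t ^- k | y <- xh] (a * t ^+ (2 * k)) (b * t ^+ k).
Proof.
(* Besides t != 0, only the genericity of the factors E(b t^s t^(1-2i)) is used. *)
move=> _ _ _ lam0 size_xh _ _ t_ne0 _ _ _ generic.
set m := (n - k)%N.
have hE (s i : nat) : Eth p (b * t ^+ s * t ^ (1 - 2 * i%:Z)) != 0.
  have := generic 0 (s%:Z + (1 - 2 * i%:Z)) 0 1 (nseq m 0) (size_nseq _ _).
  rewrite oner_eq0 !(andbF, andFb) big1 => [|r _]; last by rewrite nth_nseq if_same expr0z.
  rewrite !expr0z expr1z exprzDr ?unitfE // !mulr1 !mul1r => /(_ isT).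
  by rewrite mulrC mulrA; exact.
have hlam : part n lam =1 part m (take m lam).
  move=> i; rewrite part_take; apply: part_widen; first exact: leq_subr.
  by case=> [|j] // lt_mj; rewrite /part; case: ifP => // /andP[_ le_jn]; apply: lam0; lia.
have := W_cat_empty_tail (T := tpowers t k) (leq_subr k n) _ _ (fun s i _ => hE s i) hlam.
rewrite size_tpowers; apply; first by rewrite size_xh.
by move=> nu; apply: W_tpowers.
Qed.
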